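(* Let $n>m\geq 2$ and let $X$ be a random variable on $\mathcal{X}=\{x_1,\ldots,x_n\}$ with distribution $\mathbf{p}=(p_1,\ldots,p_n)$, where $p_1\geq\cdots\geq p_n\geq 0$. Then for every $f\in\mathcal{F}_m$, $$H(f(X))\leq H(R_m(\mathbf{p})).$$
   Context: $H$ is Shannon entropy in bits. $\mathcal{F}_m$ is the set of surjective functions from $\mathcal{X}$ onto a fixed $m$-element set. Definition of $R_m(\mathbf{p})=(r_1,\ldots,r_m)$: if $p_1<1/m$, then $R_m(\mathbf{p})=(1/m,\ldots,1/m)$. If $p_1\geq 1/m$, let $i^*$ be the maximum index $i\in\{1,\ldots,m-1\}$ with $p_i\geq \frac{\sum_{j=i+1}^n p_j}{m-i}$. Then $r_i=p_i$ for $i\leq i^*$ and $r_i=\frac{\sum_{j=i^*+1}^n p_j}{m-i^*}$ for $i=i^*+1,\ldots,m$. *)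

From Stdlib Require Import Reals Lra Lia Arith.
Open Scope R_scope.

Fixpoint fsum (n : nat) (g : nat -> R) : R :=
  match n with
  | O => 0
  | S k => fsum k g + g k
  end.

Definition plog2 (x : R) : R :=
  if Rlt_dec 0 x then x * (ln x / ln 2) else 0.

Definition entropy (k : nat) (q : nat -> R) : R :=
  - fsum k (fun j => plog2 (q j)).

Definition pushforward (n : nat) (p : nat -> R) (f : nat -> nat) (j : nat) : R :=
  fsum n (fun i => if Nat.eq_dec (f i) j then p i else 0).

Definition surj_onto (n m : nat) (f : nat -> nat) : Prop :=
  (forall i, (i < n)%nat -> (f i < m)%nat) /\
  (forall j, (j < m)%nat -> exists i, (i < n)%nat /\ f i = j).

Definition tail (n : nat) (p : nat -> R) (i : nat) : R :=
  fsum n p - fsum i p.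

(* Paper's condition for 1-indexed i: p_i >= (sum_{j=i+1}^n p_j)/(m-i);
   0-indexed: p (i-1) >= tail n p i / (m-i), checked below with i = S k'. *)
Fixpoint istar_search (n m : nat) (p : nat -> R) (k : nat) : nat :=
  match k with
  | O => O
  | S k' => if Rge_dec (p k') (tail n p (S k') / INR (m - S k'))
            then S k' else istar_search n m p k'
  end.

Definition istar (n m : nat) (p : nat -> R) : nat :=
  istar_search n m p (m - 1).

(* R_m(p) = (r_1,...,r_m), here 0-indexed as r 0 .. r (m-1). *)
Definition Rm (n m : nat) (p : nat -> R) (i : nat) : R :=
  if Rlt_dec (p 0%nat) (1 / INR m) then 1 / INR m
  else let k := istar n m p in
       if Nat.ltb i k then p i else tail n p k / INR (m - k).

(** The distribution q of f(X) is compared with the auxiliary vector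
    s_j = c + sum_{i < k, f i = j} (p_i - c), where k and c are such that
    R_m(p) = (p_0, ..., p_{k-1}, c, ..., c) with p_i >= c for i < k and
    p_k + ... + p_{n-1} = (m - k) c.  The vector s is a probability vector,
    s_{f i} >= p_i for the heavy atoms i < k and s_{f i} >= c for the others.
    Gibbs' inequality gives -H(q) >= sum_j q_j log s_j = sum_i p_i log s_{f i},
    and the two lower bounds on s turn the last sum into at least
    sum_{i<k} p_i log p_i + (m - k) c log c = -H(R_m(p)). *)

From Stdlib Require Import Reals Lra Lia.
Open Scope R_scope.

Lemma fsum_ext n g h : (forall i, (i < n)%nat -> g i = h i) -> fsum n g = fsum n h.
Proof.
  induction n as [|n IH]; intros H; simpl; [reflexivity|].
  rewrite IH by (intros; apply H; lia). rewrite H by lia. reflexivity.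
Qed.

Lemma fsum_le n g h : (forall i, (i < n)%nat -> g i <= h i) -> fsum n g <= fsum n h.
Proof.
  induction n as [|n IH]; intros H; simpl; [lra|].
  apply Rplus_le_compat; [apply IH; intros; apply H; lia | apply H; lia].
Qed.

Lemma fsum_plus n g h : fsum n (fun i => g i + h i) = fsum n g + fsum n h.
Proof. induction n as [|n IH]; simpl; [lra|]. rewrite IH. lra. Qed.

Lemma fsum_scal n a g : fsum n (fun i => a * g i) = a * fsum n g.
Proof. induction n as [|n IH]; simpl; [lra|]. rewrite IH. lra. Qed.

Lemma fsum_const n c : fsum n (fun _ => c) = INR n * c.
Proof. induction n as [|n IH]; simpl fsum; [simpl; lra|]. rewrite IH, S_INR. lra. Qed.

Lemma fsum_split a b g : fsum (a + b) g = fsum a g + fsum b (fun i => g (a + i)%nat).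
Proof.
  induction b as [|b IH]; simpl; [rewrite Nat.add_0_r; lra|].
  rewrite Nat.add_succ_r; simpl. rewrite IH. lra.
Qed.

Lemma fsum_split_at k n g : (k <= n)%nat ->
  fsum n g = fsum k g + fsum (n - k) (fun i => g (k + i)%nat).
Proof. intros Hk. rewrite <- fsum_split. f_equal. lia. Qed.

Lemma fsum_swap n m F :
  fsum n (fun i => fsum m (fun j => F i j)) = fsum m (fun j => fsum n (fun i => F i j)).
Proof.
  induction n as [|n IH]; simpl.
  - rewrite fsum_const. lra.
  - rewrite IH, <- fsum_plus. reflexivity.
Qed.

Lemma fsum_nonneg n g : (forall i, (i < n)%nat -> 0 <= g i) -> 0 <= fsum n g.
Proof.
  intros H. replace 0 with (fsum n (fun _ => 0)) by (rewrite fsum_const; lra).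
  now apply fsum_le.
Qed.

Lemma fsum_ge_term n g i :
  (forall i, (i < n)%nat -> 0 <= g i) -> (i < n)%nat -> g i <= fsum n g.
Proof.
  induction n as [|n IH]; intros H Hi; [lia|]. simpl.
  destruct (Nat.eq_dec i n) as [->|Hne].
  - assert (0 <= fsum n g) by (apply fsum_nonneg; intros; apply H; lia). lra.
  - assert (g i <= fsum n g) by (apply IH; [intros; apply H|]; lia).
    assert (0 <= g n) by (apply H; lia). lra.
Qed.

Lemma fsum_pos_exists n g : 0 < fsum n g -> exists i, (i < n)%nat /\ 0 < g i.
Proof.
  induction n as [|n IH]; simpl; intros H; [lra|].
  destruct (Rlt_dec 0 (g n)) as [Hg|Hg]; [exists n; split; [lia|exact Hg]|].
  destruct IH as [i [Hi Hgi]]; [lra|]. exists i. split; [lia|exact Hgi].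
Qed.

Lemma fsum_indicator m a x : (a < m)%nat ->
  fsum m (fun j => if Nat.eq_dec a j then x else 0) = x.
Proof.
  induction m as [|m IH]; intros H; [lia|]. simpl.
  destruct (Nat.eq_dec a m) as [->|Hne].
  - rewrite (fsum_ext m _ (fun _ => 0)), fsum_const; [lra|].
    intros i Hi. destruct (Nat.eq_dec m i); [lia|reflexivity].
  - rewrite IH by lia. lra.
Qed.

Lemma tail_fsum n p k : (k <= n)%nat -> tail n p k = fsum (n - k) (fun i => p (k + i)%nat).
Proof. intros Hk. unfold tail. rewrite (fsum_split_at k n) by exact Hk. lra. Qed.

Lemma pushforward_fsum n m p f : (forall i, (i < n)%nat -> (f i < m)%nat) ->
  fsum m (pushforward n p f) = fsum n p.
Proof.
  intros Hf. unfold pushforward. rewrite <- fsum_swap.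
  apply fsum_ext. intros i Hi. now apply fsum_indicator, Hf.
Qed.

Lemma pushforward_fsum_mul n m p f g : (forall i, (i < n)%nat -> (f i < m)%nat) ->
  fsum m (fun j => pushforward n p f j * g j) = fsum n (fun i => p i * g (f i)).
Proof.
  intros Hf. unfold pushforward.
  rewrite (fsum_ext m _ (fun j => fsum n (fun i =>
             if Nat.eq_dec (f i) j then p i * g (f i) else 0))).
  - rewrite <- fsum_swap. apply fsum_ext. intros i Hi. now apply fsum_indicator, Hf.
  - intros j Hj. rewrite Rmult_comm, <- fsum_scal. apply fsum_ext. intros i Hi.
    destruct (Nat.eq_dec (f i) j) as [<-|]; lra.
Qed.

Definition xlnx (x : R) : R := if Rlt_dec 0 x then x * ln x else 0.

Lemma entropy_le_of_fsum_xlnx k q r :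
  fsum k (fun j => xlnx (r j)) <= fsum k (fun j => xlnx (q j)) ->
  entropy k q <= entropy k r.
Proof.
  assert (Hplog2 : forall s, fsum k (fun j => plog2 (s j)) = / ln 2 * fsum k (fun j => xlnx (s j))).
  { intros s. rewrite <- fsum_scal. apply fsum_ext. intros i _.
    unfold plog2, xlnx. destruct (Rlt_dec 0 (s i)); [unfold Rdiv|]; lra. }
  assert (Hln2 : 0 < / ln 2) by (apply Rinv_0_lt_compat; pose proof ln_lt_2; lra).
  intros H. unfold entropy. rewrite !Hplog2.
  apply Ropp_le_contravar, Rmult_le_compat_l; lra.
Qed.

Lemma ln_le_compat x y : 0 < x -> x <= y -> ln x <= ln y.
Proof.
  intros Hx Hxy. destruct (Req_dec x y) as [->|Hne]; [lra|].
  left. apply ln_increasing; lra.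
Qed.

Lemma mul_ln_le_compat x a b : 0 <= x -> (0 < x -> 0 < a) -> a <= b ->
  x * ln a <= x * ln b.
Proof.
  intros Hx Ha Hab. destruct (Req_dec x 0) as [->|Hx0]; [lra|].
  apply Rmult_le_compat_l; [lra|]. apply ln_le_compat; [apply Ha|]; lra.
Qed.

Lemma xlnx_le_mul_ln x y : 0 <= x -> x <= y -> xlnx x <= x * ln y.
Proof.
  intros Hx Hxy. unfold xlnx. destruct (Rlt_dec 0 x) as [Hx0|Hx0].
  - apply mul_ln_le_compat; lra.
  - replace x with 0 by lra. lra.
Qed.

Lemma ln_le_sub1 y : 0 < y -> ln y <= y - 1.
Proof. intros Hy. pose proof (exp_ineq1_le (ln y)) as H. rewrite exp_ln in H; lra. Qed.

Lemma gibbs_term q s : 0 <= q -> 0 <= s -> (0 < q -> 0 < s) ->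
  q * ln s - xlnx q <= s - q.
Proof.
  intros Hq Hs Hqs. unfold xlnx. destruct (Rlt_dec 0 q) as [Hq0|Hq0].
  - specialize (Hqs Hq0).
    assert (Hlog : ln s - ln q <= s / q - 1).
    { assert (Hinv : 0 < / q) by (apply Rinv_0_lt_compat; lra).
      replace (ln s - ln q) with (ln (s / q))
        by (unfold Rdiv; rewrite ln_mult, ln_Rinv by lra; ring).
      apply ln_le_sub1, Rdiv_lt_0_compat; lra. }
    apply (Rmult_le_compat_l q) in Hlog; [|lra].
    replace (q * (s / q - 1)) with (s - q) in Hlog by (field; lra). lra.
  - replace q with 0 by lra. lra.
Qed.

Lemma gibbs_inequality m q s :
  (forall j, (j < m)%nat -> 0 <= q j) -> (forall j, (j < m)%nat -> 0 <= s j) ->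
  (forall j, (j < m)%nat -> 0 < q j -> 0 < s j) ->
  fsum m s = fsum m q ->
  fsum m (fun j => q j * ln (s j)) <= fsum m (fun j => xlnx (q j)).
Proof.
  intros Hq Hs Hqs Hsum.
  apply Rle_trans with (fsum m (fun j => xlnx (q j) + (s j + -1 * q j))).
  - apply fsum_le. intros j Hj.
    pose proof (gibbs_term (q j) (s j) (Hq j Hj) (Hs j Hj) (Hqs j Hj)). lra.
  - rewrite !fsum_plus, fsum_scal. lra.
Qed.

Definition capped (k : nat) (c : R) (p : nat -> R) (j : nat) : R :=
  if Nat.ltb j k then p j else c.

Section CappedBound.

Variables (n m k : nat) (p : nat -> R) (f : nat -> nat) (c : R).
Hypothesis k_le_m : (k <= m)%nat.
Hypothesis k_le_n : (k <= n)%nat.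
Hypothesis c_ge0 : 0 <= c.
Hypothesis p_ge0 : forall i, (i < n)%nat -> 0 <= p i.
Hypothesis p_ge_c : forall i, (i < k)%nat -> c <= p i.
Hypothesis f_range : forall i, (i < n)%nat -> (f i < m)%nat.
Hypothesis tail_eq : tail n p k = INR (m - k) * c.

Definition envelope (j : nat) : R :=
  c + fsum k (fun i => if Nat.eq_dec (f i) j then p i - c else 0).

Let excess_ge0 j : forall i, (i < k)%nat ->
  0 <= (if Nat.eq_dec (f i) j then p i - c else 0).
Proof. intros i Hi. destruct (Nat.eq_dec (f i) j); [pose proof (p_ge_c i Hi)|]; lra. Qed.

Lemma envelope_ge_c j : c <= envelope j.
Proof. unfold envelope. pose proof (fsum_nonneg _ _ (excess_ge0 j)). lra. Qed.

Lemma envelope_ge_heavy i : (i < k)%nat -> p i <= envelope (f i).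
Proof.
  intros Hi. unfold envelope.
  pose proof (fsum_ge_term _ _ i (excess_ge0 (f i)) Hi) as H. simpl in H.
  destruct (Nat.eq_dec (f i) (f i)); [lra | congruence].
Qed.

Lemma c_pos_of_light i : (k <= i < n)%nat -> 0 < p i -> 0 < c.
Proof.
  intros Hi Hpi. rewrite tail_fsum in tail_eq by exact k_le_n.
  pose proof (fsum_ge_term (n - k) (fun j => p (k + j)%nat) (i - k)) as H. simpl in H.
  replace (k + (i - k))%nat with i in H by lia.
  assert (p i <= INR (m - k) * c) by (rewrite <- tail_eq; apply H; [intros; apply p_ge0|]; lia).
  destruct (Req_dec c 0); [subst; lra | lra].
Qed.

Lemma envelope_fsum : fsum m envelope = fsum n p.
Proof.
  unfold envelope. rewrite fsum_plus, fsum_const, <- fsum_swap.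
  rewrite (fsum_ext k _ (fun i => p i + -1 * c)).
  2: { intros i Hi. rewrite fsum_indicator by (apply f_range; lia). lra. }
  rewrite fsum_plus, fsum_scal, fsum_const.
  unfold tail in tail_eq. rewrite minus_INR in tail_eq by exact k_le_m. lra.
Qed.

Lemma envelope_pos_of_pushforward j : 0 < pushforward n p f j -> 0 < envelope j.
Proof.
  intros Hq. destruct (fsum_pos_exists _ _ Hq) as [i [Hi Hpi]].
  destruct (Nat.eq_dec (f i) j) as [<-|]; [|lra].
  destruct (Nat.lt_ge_cases i k) as [Hik|Hik].
  - pose proof (envelope_ge_heavy i Hik). lra.
  - pose proof (c_pos_of_light i (conj Hik Hi) Hpi). pose proof (envelope_ge_c (f i)). lra.
Qed.

Lemma fsum_xlnx_capped :
  fsum m (fun j => xlnx (capped k c p j)) = fsum k (fun i => xlnx (p i)) + tail n p k * ln c.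
Proof.
  rewrite (fsum_split_at k m) by exact k_le_m. unfold capped. f_equal.
  - apply fsum_ext. intros i Hi. apply Nat.ltb_lt in Hi. now rewrite Hi.
  - rewrite (fsum_ext _ _ (fun _ => xlnx c)), fsum_const, tail_eq.
    + unfold xlnx. destruct (Rlt_dec 0 c); [lra|]. replace c with 0 by lra. lra.
    + intros i Hi. replace (Nat.ltb (k + i) k) with false; [reflexivity|].
      symmetry. apply Nat.ltb_ge. lia.
Qed.

Lemma fsum_xlnx_capped_le_cross :
  fsum m (fun j => xlnx (capped k c p j)) <= fsum n (fun i => p i * ln (envelope (f i))).
Proof.
  rewrite fsum_xlnx_capped, (fsum_split_at k n) by exact k_le_n.
  apply Rplus_le_compat.
  - apply fsum_le. intros i Hi.
    apply xlnx_le_mul_ln; [apply p_ge0; lia | apply envelope_ge_heavy; exact Hi].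
  - rewrite tail_fsum by exact k_le_n. rewrite Rmult_comm, <- fsum_scal.
    apply fsum_le. intros i Hi. rewrite Rmult_comm.
    apply mul_ln_le_compat; [apply p_ge0; lia | | apply envelope_ge_c].
    apply c_pos_of_light. lia.
Qed.

Theorem entropy_pushforward_le_capped :
  entropy m (pushforward n p f) <= entropy m (capped k c p).
Proof.
  apply entropy_le_of_fsum_xlnx.
  eapply Rle_trans; [apply fsum_xlnx_capped_le_cross|].
  rewrite <- (pushforward_fsum_mul n m p f (fun j => ln (envelope j))) by exact f_range.
  apply gibbs_inequality.
  - intros j _. apply fsum_nonneg. intros i Hi.
    destruct (Nat.eq_dec (f i) j); [apply p_ge0|lra]; exact Hi.
  - intros j _. pose proof (envelope_ge_c j). lra.
  - intros j _. apply envelope_pos_of_pushforward.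
  - now rewrite envelope_fsum, pushforward_fsum.
Qed.

End CappedBound.

Lemma istar_search_spec n m p K :
  (istar_search n m p K <= K)%nat /\
  (istar_search n m p K = 0%nat \/
   p (istar_search n m p K - 1)%nat >= tail n p (istar_search n m p K) / INR (m - istar_search n m p K)).
Proof.
  induction K as [|K IH]; simpl; [split; [lia | now left]|].
  destruct (Rge_dec (p K) (tail n p (S K) / INR (m - S K))) as [H|H].
  - split; [lia | right]. now replace (S K - 1)%nat with K by lia.
  - destruct IH as [H1 H2]. split; [lia | exact H2].
Qed.

Lemma nonincreasing_le n (p : nat -> R) : (forall i, (S i < n)%nat -> p (S i) <= p i) ->
  forall i j, (i <= j < n)%nat -> p j <= p i.
Proof.
  intros Hmono i j Hij. induction j as [|j IH].
  - replace i with 0%nat by lia. lra.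
  - destruct (Nat.eq_dec i (S j)) as [->|Hne]; [lra|].
    pose proof (Hmono j ltac:(lia)). pose proof (IH ltac:(lia)). lra.
Qed.

Lemma Rm_capped n m p : (1 <= m)%nat ->
  (forall i, (i < n)%nat -> 0 <= p i) ->
  (forall i, (S i < n)%nat -> p (S i) <= p i) ->
  fsum n p = 1 -> (m <= n)%nat ->
  exists k c, (k <= m)%nat /\ 0 <= c /\ (forall i, (i < k)%nat -> c <= p i) /\
    tail n p k = INR (m - k) * c /\ (forall j, Rm n m p j = capped k c p j).
Proof.
  intros Hm Hp Hmono Hsum Hmn.
  unfold Rm. destruct (Rlt_dec (p 0%nat) (1 / INR m)) as [Hlt|Hge].
  - exists 0%nat, (1 / INR m).
    assert (0 < INR m) by (apply lt_0_INR; lia).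
    repeat split; try (intros; lia).
    + apply Rlt_le, Rdiv_lt_0_compat; lra.
    + unfold tail. simpl. rewrite Nat.sub_0_r, Hsum. field. lra.
  - destruct (istar_search_spec n m p (m - 1)) as [Hk Hspec].
    fold (istar n m p) in Hk, Hspec. set (k := istar n m p) in *.
    assert (Hmk : 0 < INR (m - k)) by (apply lt_0_INR; lia).
    exists k, (tail n p k / INR (m - k)).
    repeat split; try lia.
    + apply Rmult_le_pos; [|left; apply Rinv_0_lt_compat; lra].
      rewrite tail_fsum by lia. apply fsum_nonneg. intros; apply Hp; lia.
    + intros i Hi. destruct Hspec as [Hk0|Hspec]; [lia|].
      pose proof (nonincreasing_le n p Hmono i (k - 1)%nat ltac:(lia)). lra.
    + field. lra.
Qed.

Theorem corollary3 (n m : nat) (p : nat -> R) (f : nat -> nat) :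
  (2 <= m)%nat -> (m < n)%nat ->
  (forall i, (i < n)%nat -> 0 <= p i) ->
  (forall i, (S i < n)%nat -> p (S i) <= p i) ->
  fsum n p = 1 ->
  surj_onto n m f ->
  entropy m (pushforward n p f) <= entropy m (Rm n m p).
Proof.
  intros Hm Hmn Hp Hmono Hsum [Hf _].
  destruct (Rm_capped n m p) as (k & c & Hkm & Hc & Hpc & Htail & HRm); try lia; auto.
  replace (entropy m (Rm n m p)) with (entropy m (capped k c p))
    by (unfold entropy; f_equal; apply fsum_ext; intros j _; now rewrite HRm).
  apply (entropy_pushforward_le_capped n m k); auto; lia.
Qed.
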